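(* Fix $\gamma\in(0,\pi/2)$ and set $v^2:=\dfrac{2\cos^2\gamma}{1+\cos^2\gamma}$ with $v>0$. Let $\mathcal U\subset\mathbb R^2$ be open, and let $T(\tau,\sigma)=\tau$ and $Y:\mathcal U\to\mathbb R^{D-1}$ be $C^2$ with $Y'^2>0$. Assume that on $\mathcal U$ $$\dot Y^2=\sin^2\gamma,\qquad Y'^2=\cos^2\gamma,\qquad (\dot Y,Y')=0 .$$ Then $(T,Y)$ satisfies the Euler–Lagrange equations of $L_{ns}$ on $\mathcal U$ if and only if $$v^2\,\ddot Y_i-Y''_i=0\qquad\text{for all } i=1,\dots,D-1 .$$
   Context: Coordinates on $\mathcal U$ are $(\tau,\sigma)$; dot and prime denote $\partial_\tau$, $\partial_\sigma$. For vectors in $\mathbb R^{D-1}$, $(\cdot,\cdot)$ is the Euclidean scalar product and $V^2=(V,V)$. Fix a constant $\rho>0$. Define $$A^2:=\dot T^2Y'^2+T'^2\dot Y^2-2\dot TT'(\dot Y,Y'),\qquad N:=\dot Y^2Y'^2-(\dot Y,Y')^2,$$ and the nonrelativistic string Lagrangian density (with $c=1$), regarded as a function of $(\dot T,T',\dot Y,Y')$ on the region $A^2>0$: $$L_{ns}:=\rho\Big[\frac{N}{2\sqrt{A^2}}-\sqrt{A^2}\Big].$$ The Euler–Lagrange equations of $L_{ns}$ are $$\partial_\tau\frac{\partial L_{ns}}{\partial\dot T}+\partial_\sigma\frac{\partial L_{ns}}{\partial T'}=0,\qquad \partial_\tau\frac{\partial L_{ns}}{\partial\dot Y^i}+\partial_\sigma\frac{\partial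 L_{ns}}{\partial Y'^i}=0\quad(i=1,\dots,D-1),$$ where the partial derivatives of $L_{ns}$ are evaluated along $(T,Y)$. *)

From Stdlib Require Import Reals List.
From Coquelicot Require Import Coquelicot.
Open Scope R_scope.

(* Components of vectors in R^(D-1) are indexed by i = 1, ..., D-1;
   a vector is a function nat -> R (values outside 1..D-1 are irrelevant). *)
Definition idx (D : nat) : list nat := List.seq 1 (D - 1).

Definition dotD (D : nat) (p q : nat -> R) : R :=
  fold_right Rplus 0 (map (fun i => p i * q i) (idx D)).

(* A^2 and N as functions of (Tdot, T', Ydot, Y') = (a, b, p, q). *)
Definition A2 (D : nat) (a b : R) (p q : nat -> R) : R :=
  a ^ 2 * dotD D q q + b ^ 2 * dotD D p p - 2 * a * b * dotD D p q.

Definition Nns (D : nat) (p q : nat -> R) : R :=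
  dotD D p p * dotD D q q - (dotD D p q) ^ 2.

(* The nonrelativistic string Lagrangian density (c = 1). *)
Definition Lns (D : nat) (rho a b : R) (p q : nat -> R) : R :=
  rho * (Nns D p q / (2 * sqrt (A2 D a b p q)) - sqrt (A2 D a b p q)).

Definition upd (p : nat -> R) (i : nat) (x : R) : nat -> R :=
  fun j => if Nat.eqb j i then x else p j.

Definition dL_dTdot D rho a b p q := Derive (fun a' => Lns D rho a' b p q) a.
Definition dL_dTp D rho a b p q := Derive (fun b' => Lns D rho a b' p q) b.
Definition dL_dYdot D rho (i : nat) a b (p q : nat -> R) :=
  Derive (fun x => Lns D rho a b (upd p i x) q) (p i).
Definition dL_dYp D rho (i : nat) a b (p q : nat -> R) :=
  Derive (fun x => Lns D rho a b p (upd q i x)) (q i).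

(* Partial derivatives d/dtau (dot) and d/dsigma (prime) of f(tau, sigma). *)
Definition dtau (f : R -> R -> R) (t s : R) : R := Derive (fun t' => f t' s) t.
Definition dsig (f : R -> R -> R) (t s : R) : R := Derive (fun s' => f t s') s.

Definition along (F : R -> R -> (nat -> R) -> (nat -> R) -> R)
  (T : R -> R -> R) (Y : nat -> R -> R -> R) (t s : R) : R :=
  F (dtau T t s) (dsig T t s) (fun j => dtau (Y j) t s) (fun j => dsig (Y j) t s).

Definition EulerLagrange (D : nat) (rho : R) (U : R * R -> Prop)
  (T : R -> R -> R) (Y : nat -> R -> R -> R) : Prop :=
  forall t s, U (t, s) ->
    dtau (along (dL_dTdot D rho) T Y) t s + dsig (along (dL_dTp D rho) T Y) t s = 0
    /\ forall i, In i (idx D) ->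
       dtau (along (dL_dYdot D rho i) T Y) t s
       + dsig (along (dL_dYp D rho i) T Y) t s = 0.

Definition C1_on (U : R * R -> Prop) (f : R -> R -> R) : Prop :=
  forall t s, U (t, s) ->
    continuous (fun z : R * R => f (fst z) (snd z)) (t, s)
    /\ ex_derive (fun t' => f t' s) t
    /\ ex_derive (fun s' => f t s') s
    /\ continuous (fun z : R * R => dtau f (fst z) (snd z)) (t, s)
    /\ continuous (fun z : R * R => dsig f (fst z) (snd z)) (t, s).

Definition C2_on (U : R * R -> Prop) (f : R -> R -> R) : Prop :=
  C1_on U f /\ C1_on U (dtau f) /\ C1_on U (dsig f).

(* In the static gauge T = tau the constraints make A^2 = Y'^2 = cos^2 gamma and
   N = sin^2 gamma cos^2 gamma constant on U.  Hence dL/dTdot and dL/dT' are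
   constant and the T equation holds identically, while, with c = cos gamma,
   dL/dYdot_i = rho c Ydot_i and dL/dY'_i = - rho (1 + c^2) / (2 c) Y'_i.  The
   Y equations are therefore the wave equation v^2 Ydd_i - Y''_i = 0 multiplied by
   the positive constant rho (1 + c^2) / (2 c). *)
From Stdlib Require Import Reals List Lra.
From Coquelicot Require Import Coquelicot.
Open Scope R_scope.

Lemma sum_map_if_eqb (l : list nat) (i : nat) (u : R) (v : nat -> R) :
  NoDup l -> In i l ->
  fold_right Rplus 0 (map (fun j => if Nat.eqb j i then u else v j) l)
  = fold_right Rplus 0 (map v l) - v i + u.
Proof.
  induction l as [|a l IH]; intros Hnd Hin; [destruct Hin|].
  inversion Hnd as [|? ? Ha Hnd']; subst; simpl.
  destruct (Nat.eqb a i) eqn:E.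
  - apply Nat.eqb_eq in E; subst.
    rewrite (map_ext_in _ v); [ring|].
    intros j Hj. destruct (Nat.eqb j i) eqn:E'; [|reflexivity].
    apply Nat.eqb_eq in E'; subst; contradiction.
  - destruct Hin as [Hin|Hin].
    + subst. rewrite Nat.eqb_refl in E. discriminate.
    + rewrite IH by assumption. ring.
Qed.

Lemma dotD_ext D p p' q q' :
  (forall j, p j = p' j) -> (forall j, q j = q' j) -> dotD D p q = dotD D p' q'.
Proof.
  intros Hp Hq. unfold dotD. f_equal. apply map_ext. intro j. now rewrite Hp, Hq.
Qed.

Lemma dotD_upd D p q i x y : In i (idx D) ->
  dotD D (upd p i x) (upd q i y) = dotD D p q - p i * q i + x * y.
Proof.
  intro Hi. unfold dotD.
  rewrite (map_ext _ (fun j => if Nat.eqb j i then x * y else p j * q j)).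
  - apply (sum_map_if_eqb _ _ _ (fun j => p j * q j)); [apply seq_NoDup | exact Hi].
  - intro j. unfold upd. now destruct (Nat.eqb j i).
Qed.

Lemma upd_id (q : nat -> R) i j : upd q i (q i) j = q j.
Proof.
  unfold upd. destruct (Nat.eqb j i) eqn:E; [apply Nat.eqb_eq in E; subst|]; reflexivity.
Qed.

Lemma dotD_upd_l D p q i x : In i (idx D) ->
  dotD D (upd p i x) q = dotD D p q - p i * q i + x * q i.
Proof.
  intro Hi. rewrite (dotD_ext D _ (upd p i x) _ (upd q i (q i))).
  - now apply dotD_upd.
  - reflexivity.
  - intro j. symmetry. apply upd_id.
Qed.

Lemma dotD_upd_r D p q i y : In i (idx D) ->
  dotD D p (upd q i y) = dotD D p q - p i * q i + p i * y.
Proof.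
  intro Hi. rewrite (dotD_ext D _ (upd p i (p i)) _ (upd q i y)).
  - now apply dotD_upd.
  - intro j. symmetry. apply upd_id.
  - reflexivity.
Qed.

Definition Lns_dots (rho a b pp qq pq : R) : R :=
  rho * ((pp * qq - pq ^ 2) / (2 * sqrt (a ^ 2 * qq + b ^ 2 * pp - 2 * a * b * pq))
         - sqrt (a ^ 2 * qq + b ^ 2 * pp - 2 * a * b * pq)).

Lemma Lns_dotsE D rho a b p q :
  Lns D rho a b p q = Lns_dots rho a b (dotD D p p) (dotD D q q) (dotD D p q).
Proof. reflexivity. Qed.

(* After [auto_derive] every square root is taken of a polynomial equal to c^2. *)
Ltac sqrt_of_square c :=
  repeat match goal with
  | |- context [sqrt ?r] => replace r with (c * c) by ring; rewrite (sqrt_square c) by lra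
  end.

Section StaticGaugeMomenta.

Variables (D : nat) (rho c : R) (P Q : nat -> R).
Hypothesis Hc : 0 < c.
Hypothesis HPP : dotD D P P = 1 - c ^ 2.
Hypothesis HQQ : dotD D Q Q = c ^ 2.
Hypothesis HPQ : dotD D P Q = 0.

Lemma dL_dTdot_static : dL_dTdot D rho 1 0 P Q = - rho * c * (3 - c ^ 2) / 2.
Proof.
  unfold dL_dTdot.
  rewrite (Derive_ext _ (fun a => Lns_dots rho a 0 (1 - c ^ 2) (c ^ 2) 0))
    by (intro; now rewrite Lns_dotsE, HPP, HQQ, HPQ).
  unfold Lns_dots.
  apply is_derive_unique. auto_derive; sqrt_of_square c.
  - repeat split; nra.
  - field. lra.
Qed.

Lemma dL_dTp_static : dL_dTp D rho 1 0 P Q = 0.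
Proof.
  unfold dL_dTp.
  rewrite (Derive_ext _ (fun b => Lns_dots rho 1 b (1 - c ^ 2) (c ^ 2) 0))
    by (intro; now rewrite Lns_dotsE, HPP, HQQ, HPQ).
  unfold Lns_dots.
  apply is_derive_unique. auto_derive; sqrt_of_square c.
  - repeat split; nra.
  - field. lra.
Qed.

Lemma dL_dYdot_static i : In i (idx D) -> dL_dYdot D rho i 1 0 P Q = rho * c * P i.
Proof.
  intro Hi. unfold dL_dYdot.
  rewrite (Derive_ext _ (fun x => Lns_dots rho 1 0 (1 - c ^ 2 - P i * P i + x * x)
                                    (c ^ 2) (- P i * Q i + x * Q i))).
  2:{ intro x. rewrite Lns_dotsE, dotD_upd, dotD_upd_l, HPP, HQQ, HPQ by exact Hi.
      f_equal; ring. }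
  unfold Lns_dots. apply is_derive_unique. auto_derive; sqrt_of_square c.
  - repeat split; nra.
  - field. lra.
Qed.

Lemma dL_dYp_static i : In i (idx D) ->
  dL_dYp D rho i 1 0 P Q = - (rho * (1 + c ^ 2) / (2 * c)) * Q i.
Proof.
  intro Hi. unfold dL_dYp.
  rewrite (Derive_ext _ (fun x => Lns_dots rho 1 0 (1 - c ^ 2)
                                    (c ^ 2 - Q i * Q i + x * x) (- P i * Q i + P i * x))).
  2:{ intro x. rewrite Lns_dotsE, dotD_upd, dotD_upd_r, HPP, HQQ, HPQ by exact Hi.
      f_equal; ring. }
  unfold Lns_dots. apply is_derive_unique. auto_derive; sqrt_of_square c.
  - repeat split; nra.
  - field. lra.
Qed.

End StaticGaugeMomenta.

Lemma open_slice_fst (U : R * R -> Prop) t s :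
  open U -> U (t, s) -> locally t (fun t' => U (t', s)).
Proof.
  intros HU Hts. destruct (HU _ Hts) as [e He]. exists e. intros t' Ht'.
  apply He. split; [exact Ht' | apply ball_center].
Qed.

Lemma open_slice_snd (U : R * R -> Prop) t s :
  open U -> U (t, s) -> locally s (fun s' => U (t, s')).
Proof.
  intros HU Hts. destruct (HU _ Hts) as [e He]. exists e. intros s' Hs'.
  apply He. split; [apply ball_center | exact Hs'].
Qed.

Lemma Derive_locally_const (f : R -> R) x k :
  locally x (fun y => f y = k) -> Derive f x = 0.
Proof.
  intro Hf. rewrite (Derive_ext_loc f (fun _ => k)) by exact Hf. apply Derive_const.
Qed.

Lemma Derive_locally_scal (f g : R -> R) x k :
  locally x (fun y => f y = k * g y) -> Derive f x = k * Derive g x.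
Proof.
  intro Hf. rewrite (Derive_ext_loc f (fun y => k * g y)) by exact Hf. apply Derive_scal.
Qed.

Lemma along_static_gauge F (Y : nat -> R -> R -> R) t s :
  along F (fun t _ => t) Y t s
  = F 1 0 (fun j => dtau (Y j) t s) (fun j => dsig (Y j) t s).
Proof. unfold along, dtau, dsig. now rewrite Derive_id, Derive_const. Qed.

Section StaticGaugeEquations.

Variables (D : nat) (rho c : R) (U : R * R -> Prop) (Y : nat -> R -> R -> R).
Hypothesis Hc : 0 < c.
Hypothesis HU : open U.
Hypothesis Hshell : forall t s, U (t, s) ->
  dotD D (fun j => dtau (Y j) t s) (fun j => dtau (Y j) t s) = 1 - c ^ 2
  /\ dotD D (fun j => dsig (Y j) t s) (fun j => dsig (Y j) t s) = c ^ 2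
  /\ dotD D (fun j => dtau (Y j) t s) (fun j => dsig (Y j) t s) = 0.

Lemma EulerLagrange_T_static t s : U (t, s) ->
  dtau (along (dL_dTdot D rho) (fun t _ => t) Y) t s
  + dsig (along (dL_dTp D rho) (fun t _ => t) Y) t s = 0.
Proof.
  intro Hts. unfold dtau at 1, dsig at 1.
  rewrite (Derive_locally_const _ t (- rho * c * (3 - c ^ 2) / 2)).
  2:{ generalize (open_slice_fst U t s HU Hts); apply filter_imp; intros t' Ht'.
      destruct (Hshell _ _ Ht') as (HPP & HQQ & HPQ).
      rewrite along_static_gauge. now apply dL_dTdot_static. }
  rewrite (Derive_locally_const _ s 0); [ring|].
  generalize (open_slice_snd U t s HU Hts); apply filter_imp; intros s' Hs'.
  destruct (Hshell _ _ Hs') as (HPP & HQQ & HPQ).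
  rewrite along_static_gauge. now apply (dL_dTp_static _ _ c).
Qed.

Lemma EulerLagrange_Y_static t s i : U (t, s) -> In i (idx D) ->
  dtau (along (dL_dYdot D rho i) (fun t _ => t) Y) t s
  + dsig (along (dL_dYp D rho i) (fun t _ => t) Y) t s
  = rho * (1 + c ^ 2) / (2 * c)
    * (2 * c ^ 2 / (1 + c ^ 2) * dtau (dtau (Y i)) t s - dsig (dsig (Y i)) t s).
Proof.
  intros Hts Hi. unfold dtau at 1, dsig at 1.
  rewrite (Derive_locally_scal _ (fun t' => dtau (Y i) t' s) t (rho * c)).
  2:{ generalize (open_slice_fst U t s HU Hts); apply filter_imp; intros t' Ht'.
      destruct (Hshell _ _ Ht') as (HPP & HQQ & HPQ).
      rewrite along_static_gauge. now apply dL_dYdot_static. }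
  rewrite (Derive_locally_scal _ (fun s' => dsig (Y i) t s') s
             (- (rho * (1 + c ^ 2) / (2 * c)))).
  2:{ generalize (open_slice_snd U t s HU Hts); apply filter_imp; intros s' Hs'.
      destruct (Hshell _ _ Hs') as (HPP & HQQ & HPQ).
      rewrite along_static_gauge. now apply dL_dYp_static. }
  change (Derive (fun t' => dtau (Y i) t' s) t) with (dtau (dtau (Y i)) t s).
  change (Derive (fun s' => dsig (Y i) t s') s) with (dsig (dsig (Y i)) t s).
  field. split; nra.
Qed.

End StaticGaugeEquations.

Theorem mainTheorem5 (D : nat) (rho gamma : R) (U : R * R -> Prop)
  (Y : nat -> R -> R -> R) :
  0 < rho ->
  0 < gamma < PI / 2 ->
  open U ->
  (forall i, In i (idx D) -> C2_on U (Y i)) ->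
  (forall t s, U (t, s) ->
     0 < dotD D (fun j => dsig (Y j) t s) (fun j => dsig (Y j) t s)) ->
  (forall t s, U (t, s) ->
     dotD D (fun j => dtau (Y j) t s) (fun j => dtau (Y j) t s) = (sin gamma) ^ 2
     /\ dotD D (fun j => dsig (Y j) t s) (fun j => dsig (Y j) t s) = (cos gamma) ^ 2
     /\ dotD D (fun j => dtau (Y j) t s) (fun j => dsig (Y j) t s) = 0) ->
  (EulerLagrange D rho U (fun t _ => t) Y <->
   forall t s, U (t, s) -> forall i, In i (idx D) ->
     (2 * (cos gamma) ^ 2 / (1 + (cos gamma) ^ 2)) * dtau (dtau (Y i)) t s
     - dsig (dsig (Y i)) t s = 0).
Proof.
  intros Hrho Hgamma HU _ _ Hconstr.
  assert (Hc : 0 < cos gamma) by (apply cos_gt_0; lra).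
  assert (Hsin : sin gamma ^ 2 = 1 - cos gamma ^ 2).
  { pose proof (sin2 gamma) as Hsin2. unfold Rsqr in Hsin2. simpl. lra. }
  assert (Hshell : forall t s, U (t, s) ->
    dotD D (fun j => dtau (Y j) t s) (fun j => dtau (Y j) t s) = 1 - cos gamma ^ 2
    /\ dotD D (fun j => dsig (Y j) t s) (fun j => dsig (Y j) t s) = cos gamma ^ 2
    /\ dotD D (fun j => dtau (Y j) t s) (fun j => dsig (Y j) t s) = 0).
  { intros t s Hts. rewrite <- Hsin. exact (Hconstr t s Hts). }
  assert (Hk : 0 < rho * (1 + cos gamma ^ 2) / (2 * cos gamma))
    by (apply Rdiv_lt_0_compat; nra).
  pose proof (EulerLagrange_T_static D rho (cos gamma) U Y Hc HU Hshell) as HT.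
  pose proof (EulerLagrange_Y_static D rho (cos gamma) U Y Hc HU Hshell) as HY.
  split.
  - intros HEL t s Hts i Hi.
    pose proof (proj2 (HEL t s Hts) i Hi) as HELi. rewrite HY in HELi by assumption.
    apply Rmult_integral in HELi. destruct HELi as [HELi|HELi]; [lra | exact HELi].
  - intros Hwave t s Hts. split; [now apply HT|].
    intros i Hi. rewrite HY, Hwave by assumption. ring.
Qed.
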